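(* Let $G$ be a finite group acting transitively on a finite set $X$, fix $x_0\in X$, let $H=G_{x_0}$, and let $K\subset G$ be a regular subgroup. Let $\rho\colon K\to U(\mathcal{H})$ be a unitary representation and $v\in\mathcal{H}$ such that $\{\rho(k)v\}_{k\in K}$ spans $\mathcal{H}$. Then there exists a unitary representation $\tilde\rho\colon G\to U(\mathcal{H})$ with $\tilde\rho|_K=\rho$ and $\tilde\rho(h)v=v$ for all $h\in H$ if and only if the function $\varphi(k)=\langle v,\rho(k)v\rangle$ ($k\in K$) belongs to $L^2(K)^H$.
   Context: $H$ acts on $K$ by $h\cdot k=k'$ iff $hk\cdot x_0=k'\cdot x_0$, and $L^2(K)^H$ is the space of functions $\varphi\colon K\to\mathbb{C}$ with $\varphi(h\cdot k)=\varphi(k)$ for all $h\in H$, $k\in K$. A subgroup $K\subset G$ is regular if it acts transitively on $X$ with trivial point stabilizers. Inner products are linear in the first argument. *)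

From HB Require Import structures.
From mathcomp Require Import all_boot all_order all_algebra all_fingroup all_solvable all_field all_character.
From mathcomp Require Import spectral.
Set Implicit Arguments. Unset Strict Implicit. Unset Printing Implicit Defensive.
Import Order.TTheory GRing.Theory Num.Theory.
Local Open Scope ring_scope.

Section Defs.
Variables (gT : finGroupType) (X : finType).

Definition is_left_action (G : {set gT}) (act : gT -> X -> X) : Prop :=
  (forall x, act 1%g x = x) /\
  (forall g h x, g \in G -> h \in G -> act (g * h)%g x = act g (act h x)).

Definition act_transitive (G : {set gT}) (act : gT -> X -> X) : Prop :=
  forall x y : X, exists2 g, g \in G & act g x = y.

Definition stabilizer (G : {set gT}) (act : gT -> X -> X) (x0 : X) : {set gT} :=
  [set g in G | act g x0 == x0].

Definition regular_subgroup (K : {set gT}) (act : gT -> X -> X) : Prop :=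
  act_transitive K act /\
  (forall (x : X) (k : gT), k \in K -> act k x = x -> k = 1%g).

(* phi in L^2(K)^H : phi (h . k) = phi k where h . k = k' iff hk.x0 = k'.x0 *)
Definition in_L2_inv (H K : {set gT}) (act : gT -> X -> X) (x0 : X)
  (phi : gT -> algC) : Prop :=
  forall h k k', h \in H -> k \in K -> k' \in K ->
    act (h * k)%g x0 = act k' x0 -> phi k' = phi k.
End Defs.

(* Hilbert space C^n as column vectors; inner product linear in the first argument *)
Definition inner (n : nat) (u w : 'cV[algC]_n) : algC :=
  \sum_(i < n) u i 0 * (w i 0)^*.

Definition orbit_spans (gT : finGroupType) (K : {group gT}) (n : nat)
  (rho : mx_representation algC K n) (v : 'cV[algC]_n) : Prop :=
  (\sum_(k in K) <<(rho k *m v)^T>> == 1%:M)%MS.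

From HB Require Import structures.
From mathcomp Require Import all_boot all_order all_algebra all_fingroup all_solvable all_field all_character.
From mathcomp Require Import spectral.
Set Implicit Arguments.
Unset Strict Implicit.
Unset Printing Implicit Defensive.
Import Order.TTheory GRing.Theory Num.Theory.
Local Open Scope ring_scope.
Local Open Scope sesquilinear_scope.

(* Regularity of K identifies X with K through k |-> k.x0, so the orbit
   vectors w_x := rho(k_x) v (k_x.x0 = x) are the columns of a matrix M whose
   Gram matrix is (phi(k_x^-1 k_y)^* )_{x,y}. The invariance of phi under H is
   exactly the invariance of this Gram matrix under the permutations of X
   induced by G. Hence for each g the map w_x |-> w_{g.x} preserves all inner
   products, and as the w_x span C^n it extends to a unitary rt(g), which is
   rho on K and fixes v = w_{x0} on H. Conversely, such an extension makes phi
   a matrix coefficient of G that is H-invariant on both sides. *)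

Section GramMatrix.
Variable C : numClosedFieldType.

Lemma trmxC_mul_eq0 m p (A : 'M[C]_(m, p)) : A^t* *m A = 0 -> A = 0.
Proof.
move=> /matrixP AA0; apply/matrixP => i j; rewrite mxE.
have : \sum_l (A l j)^* * A l j = (A^t* *m A) j j.
  by rewrite mxE; apply: eq_bigr => l _; rewrite !mxE.
rewrite AA0 mxE => /eqP.
rewrite psumr_eq0 => [/allP/(_ i (mem_index_enum _))|l _]; last first.
  by rewrite mulrC mul_conjC_ge0.
by rewrite mulrC mul_conjC_eq0 => /eqP.
Qed.

Lemma gram_eq_mulmx_eq0 m1 m2 p q (M : 'M[C]_(m1, p)) (N : 'M[C]_(m2, p))
    (Y : 'M[C]_(p, q)) :
  N^t* *m N = M^t* *m M -> M *m Y = 0 -> N *m Y = 0.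
Proof.
move=> gramNM MY0; apply: trmxC_mul_eq0.
rewrite trmx_mul map_mxM -mulmxA [_ *m (N *m Y)]mulmxA gramNM.
by rewrite -mulmxA MY0 !mulmx0.
Qed.

Section RightInverse.
Variables (m p : nat) (M : 'M[C]_(m, p)) (R : 'M[C]_(p, m)).
Hypothesis MR1 : M *m R = 1%:M.

Lemma gram_eq_mulmxK m' (N : 'M[C]_(m', p)) :
  N^t* *m N = M^t* *m M -> N *m R *m M = N.
Proof.
move=> gramNM; apply/eqP; rewrite -subr_eq0 -mulmxA -[X in _ - X]mulmx1.
rewrite -mulmxBr; apply/eqP; apply: (gram_eq_mulmx_eq0 gramNM).
by rewrite mulmxBr mulmx1 mulmxA MR1 mul1mx subrr.
Qed.

Lemma gram_eq_unitarymx (N : 'M[C]_(m, p)) :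
  N^t* *m N = M^t* *m M -> N *m R \is unitarymx.
Proof.
move=> gramNM; apply/unitarymxP/mulmx1C.
have RM1 : R^t* *m M^t* = 1%:M by rewrite -map_mxM -trmx_mul MR1 trmx1 map_mx1.
rewrite trmx_mul map_mxM -mulmxA [_ *m (N *m R)]mulmxA gramNM.
by rewrite !mulmxA RM1 mul1mx MR1.
Qed.

End RightInverse.
End GramMatrix.

Lemma innerE n (u w : 'cV[algC]_n) : inner u w = (w^t* *m u) 0 0.
Proof. by rewrite /inner mxE; apply: eq_bigr => i _; rewrite !mxE mulrC. Qed.

Lemma inner_conj n (u w : 'cV[algC]_n) : inner u w = (inner w u)^*.
Proof.
rewrite /inner rmorph_sum; apply: eq_bigr => i _.
by rewrite rmorphM /= conjCK mulrC.
Qed.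

Lemma inner_unitarymx n (U : 'M[algC]_n) u w :
  U \is unitarymx -> inner (U *m u) (U *m w) = inner u w.
Proof.
move=> /unitarymxP/mulmx1C UU1; rewrite !innerE trmx_mul map_mxM.
by rewrite -mulmxA [_ *m (U *m u)]mulmxA UU1 mul1mx.
Qed.

Lemma gram_mxE m n (A : 'M[algC]_(m, n)) a b :
  (A^t* *m A) a b = inner (col b A) (col a A).
Proof. by rewrite /inner mxE; apply: eq_bigr => i _; rewrite !mxE mulrC. Qed.

Section LeftAction.
Variables (gT : finGroupType) (X : finType) (G : {group gT}).
Variable act : gT -> X -> X.
Hypothesis act_left : is_left_action G act.

Lemma left_act1 x : act 1%g x = x.
Proof. by case: act_left. Qed.

Lemma left_actM g h x : g \in G -> h \in G -> act (g * h)%g x = act g (act h x).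
Proof. by case: act_left => _; apply. Qed.

Lemma left_actK g x : g \in G -> act g^-1%g (act g x) = x.
Proof. by move=> gG; rewrite -left_actM ?groupV // mulVg left_act1. Qed.

Lemma left_actKV g x : g \in G -> act g (act g^-1%g x) = x.
Proof. by move=> gG; rewrite -left_actM ?groupV // mulgV left_act1. Qed.

Definition act_mx (R : pzSemiRingType) g : 'M[R]_#|X| :=
  \matrix_(a, b) (a == enum_rank (act g (enum_val b)))%:R.

Lemma mulmx_act_mx (R : pzSemiRingType) m (A : 'M[R]_(m, #|X|)) g i j :
  (A *m act_mx R g) i j = A i (enum_rank (act g (enum_val j))).
Proof.
rewrite mxE (bigD1 (enum_rank (act g (enum_val j)))) //= mxE eqxx mulr1.
by rewrite big1 ?addr0 // => a /negbTE a_neq; rewrite mxE a_neq mulr0.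
Qed.

Lemma act_mx1 (R : pzSemiRingType) : act_mx R 1%g = 1%:M.
Proof. by apply/matrixP => a b; rewrite !mxE left_act1 enum_valK eq_sym. Qed.

Lemma act_mxM (R : pzSemiRingType) g h : g \in G -> h \in G ->
  act_mx R (g * h)%g = act_mx R g *m act_mx R h.
Proof.
move=> gG hG; apply/matrixP => a b.
by rewrite mulmx_act_mx !mxE enum_rankK left_actM.
Qed.

Lemma col_act_mx (R : pzSemiRingType) m (A : 'M[R]_(m, #|X|)) g a :
  col a (A *m act_mx R g) = col (enum_rank (act g (enum_val a))) A.
Proof. by apply/matrixP => i j; rewrite mxE [RHS]mxE mulmx_act_mx. Qed.

Lemma act_mx_delta (R : pzSemiRingType) g x :
  act_mx R g *m delta_mx (enum_rank x) 0
  = delta_mx (enum_rank (act g x)) 0 :> 'cV_#|X|.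
Proof.
by rewrite -colE; apply/matrixP => a b; rewrite !mxE enum_rankK (ord1 b) andbT.
Qed.

Section RegularSubgroup.
Variables (K : {group gT}) (x0 : X).
Hypotheses (sKG : K \subset G) (K_regular : regular_subgroup K act).

(* The unique k in K with k.x0 = x; the default 1 is never used. *)
Definition orbit_rep x : gT := odflt 1%g [pick k in K | act k x0 == x].

Lemma orbit_repP x : orbit_rep x \in K /\ act (orbit_rep x) x0 = x.
Proof.
rewrite /orbit_rep; case: pickP => [k /andP[kK /eqP] | noK] //=.
have [k kK kx0] := proj1 K_regular x0 x.
by have := noK k; rewrite kK kx0 eqxx.
Qed.

Lemma orbit_rep_in x : orbit_rep x \in K.
Proof. by case: (orbit_repP x). Qed.

Lemma orbit_rep_inG x : orbit_rep x \in G.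
Proof. exact: subsetP sKG _ (orbit_rep_in x). Qed.

Lemma orbit_repK x : act (orbit_rep x) x0 = x.
Proof. by case: (orbit_repP x). Qed.

Lemma orbit_repV x : act (orbit_rep x)^-1%g x = x0.
Proof. by rewrite -{2}(orbit_repK x) left_actK ?orbit_rep_inG. Qed.

Lemma act_orbit_rep k : k \in K -> orbit_rep (act k x0) = k.
Proof.
move=> kK; have kG := subsetP sKG k kK.
set k' := orbit_rep _; have k'K : k' \in K := orbit_rep_in _.
have fix_x0 : act (k'^-1 * k)%g x0 = x0.
  by rewrite left_actM ?groupV ?orbit_rep_inG // orbit_repV.
have := proj2 K_regular x0 _ (groupM (groupVr k'K) kK) fix_x0.
by move=> k'k1; rewrite -(mulKVg k' k) k'k1 mulg1.
Qed.

Lemma orbit_rep_x0 : orbit_rep x0 = 1%g.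
Proof. by rewrite -{1}(left_act1 x0) act_orbit_rep. Qed.

Lemma orbit_rep_mul k x : k \in K -> orbit_rep (act k x) = (k * orbit_rep x)%g.
Proof.
move=> kK; rewrite -{1}(orbit_repK x).
rewrite -left_actM ?orbit_rep_inG ?(subsetP sKG) //.
by rewrite act_orbit_rep // groupM ?orbit_rep_in.
Qed.


Section Extension.
Variables (n : nat) (rho : mx_representation algC K n) (v : 'cV[algC]_n).
Hypothesis rho_unitary : forall k, k \in K -> rho k \is unitarymx.

Let H := stabilizer G act x0.

Definition rho_coeff k := inner v (rho k *m v).

Lemma extension_coeff_invariant (rt : mx_representation algC G n) :
  (forall g, g \in G -> rt g \is unitarymx) ->
  (forall k, k \in K -> rt k = rho k) ->
  (forall h, h \in H -> rt h *m v = v) ->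
  in_L2_inv H K act x0 rho_coeff.
Proof.
move=> rt_unitary rt_ext rt_fix h k k' hH kK k'K hk_k'.
have hG : h \in G by move: hH; rewrite inE => /andP[].
have kG := subsetP sKG k kK; have k'G := subsetP sKG k' k'K.
set h' := (k'^-1 * (h * k))%g.
have h'H : h' \in H.
  rewrite inE !groupM ?groupV //=.
  by rewrite !left_actM ?groupM ?groupV // -(left_actM _ hG kG) hk_k' left_actK.
have h'G : h' \in G by move: h'H; rewrite inE => /andP[].
rewrite /rho_coeff -!rt_ext //.
have -> : k = (h^-1 * k' * h')%g by rewrite /h' mulgA mulgK mulKg.
clearbody h'.
rewrite !repr_mxM ?groupM ?groupV // -mulmxA (rt_fix _ h'H) repr_mxV //.
rewrite -{1}(rt_fix h hH) -[RHS](inner_unitarymx _ _ (rt_unitary h hG)).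
by rewrite !mulmxA mulmxV ?mul1mx ?unitarymx_unit ?rt_unitary.
Qed.

Definition orbit_mx : 'M[algC]_(n, #|X|) :=
  \matrix_(i, j) (rho (orbit_rep (enum_val j)) *m v) i 0.

Lemma col_orbit_mx x : col (enum_rank x) orbit_mx = rho (orbit_rep x) *m v.
Proof. by apply/matrixP => i j; rewrite (ord1 j) !mxE enum_rankK. Qed.

Lemma orbit_mx_x0 : col (enum_rank x0) orbit_mx = v.
Proof. by rewrite col_orbit_mx orbit_rep_x0 repr_mx1 mul1mx. Qed.

Lemma gram_orbit_mx x y :
  (orbit_mx^t* *m orbit_mx) (enum_rank x) (enum_rank y)
  = (rho_coeff ((orbit_rep x)^-1 * orbit_rep y))^*.
Proof.
have kxK := orbit_rep_in x; have kyK := orbit_rep_in y.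
rewrite gram_mxE !col_orbit_mx -{1}(mulKVg (orbit_rep x) (orbit_rep y)).
rewrite repr_mxM ?groupM ?groupV // -mulmxA inner_unitarymx ?rho_unitary //.
by rewrite inner_conj.
Qed.

Lemma orbit_mx_right_inverse :
  orbit_spans rho v -> exists R : 'M[algC]_(#|X|, n), orbit_mx *m R = 1%:M.
Proof.
move=> /andP[_ spans]; suff : row_full orbit_mx^T.
  case/row_fullP => B BM1; exists B^T.
  by rewrite -[orbit_mx]trmxK -trmx_mul BM1 trmx1.
rewrite -sub1mx; apply: submx_trans spans _; apply/sumsmx_subP => k kK.
rewrite genmxE -(act_orbit_rep kK) -col_orbit_mx tr_col.
exact: row_sub.
Qed.

Lemma orbit_mx_act_mx k :
  k \in K -> orbit_mx *m act_mx algC k = rho k *m orbit_mx.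
Proof.
move=> kK; apply/matrixP => i j; rewrite mulmx_act_mx mxE enum_rankK.
rewrite orbit_rep_mul // repr_mxM ?orbit_rep_in // -mulmxA mxE [RHS]mxE.
by apply: eq_bigr => l _; rewrite [orbit_mx _ _]mxE.
Qed.

Section Construction.
Hypothesis coeff_inv : in_L2_inv H K act x0 rho_coeff.

Lemma rho_coeff_act g x y : g \in G ->
  rho_coeff ((orbit_rep (act g x))^-1 * orbit_rep (act g y))
  = rho_coeff ((orbit_rep x)^-1 * orbit_rep y).
Proof.
move=> gG; have kG := orbit_rep_inG.
set h := ((orbit_rep (act g x))^-1 * g * orbit_rep x)%g.
have hG : h \in G by rewrite !groupM ?groupV ?kG.
apply: (coeff_inv (h := h)); rewrite ?groupM ?groupV ?orbit_rep_in //.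
  rewrite inE hG !left_actM ?groupM ?groupV ?kG //.
  by rewrite orbit_repK orbit_repV eqxx.
by rewrite /h !left_actM ?groupM ?groupV ?kG // !orbit_repK left_actKV ?kG.
Qed.

Lemma gram_orbit_mx_act g : g \in G ->
  (orbit_mx *m act_mx algC g)^t* *m (orbit_mx *m act_mx algC g)
  = orbit_mx^t* *m orbit_mx.
Proof.
move=> gG; apply/matrixP => a b.
rewrite [LHS]gram_mxE !col_act_mx -gram_mxE !gram_orbit_mx rho_coeff_act //.
by rewrite -gram_orbit_mx !enum_valK.
Qed.

Section OrbitRightInverse.
Variables (R : 'M[algC]_(#|X|, n)) (MR1 : orbit_mx *m R = 1%:M).

Definition ext_mx g := orbit_mx *m act_mx algC g *m R.

Lemma ext_mx_orbit_mx g :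
  g \in G -> ext_mx g *m orbit_mx = orbit_mx *m act_mx algC g.
Proof. by move=> gG; exact: (gram_eq_mulmxK MR1 (gram_orbit_mx_act gG)). Qed.

Lemma ext_mx_repr : mx_repr G ext_mx.
Proof.
split=> [|g h gG hG]; first by rewrite /ext_mx act_mx1 mulmx1.
by rewrite [LHS]/ext_mx act_mxM // mulmxA -ext_mx_orbit_mx // /ext_mx !mulmxA.
Qed.

Lemma ext_mx_unitary g : g \in G -> ext_mx g \is unitarymx.
Proof. by move=> gG; exact: (gram_eq_unitarymx MR1 (gram_orbit_mx_act gG)). Qed.

Lemma ext_mx_restrict k : k \in K -> ext_mx k = rho k.
Proof. by move=> kK; rewrite /ext_mx orbit_mx_act_mx // -mulmxA MR1 mulmx1. Qed.

Lemma ext_mx_fix h : h \in H -> ext_mx h *m v = v.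
Proof.
rewrite inE => /andP[hG /eqP hx0].
rewrite -orbit_mx_x0 colE mulmxA ext_mx_orbit_mx // -mulmxA act_mx_delta.
by rewrite hx0.
Qed.

End OrbitRightInverse.

Lemma extension_exists : orbit_spans rho v ->
  exists rt : mx_representation algC G n,
    [/\ forall g, g \in G -> rt g \is unitarymx,
        forall k, k \in K -> rt k = rho k
      & forall h, h \in H -> rt h *m v = v].
Proof.
case/orbit_mx_right_inverse => R MR1.
exists (MxRepresentation (ext_mx_repr MR1)).
split=> /= [g|k|h]; first exact: ext_mx_unitary.
  exact: ext_mx_restrict.
exact: ext_mx_fix.
Qed.

End Construction.
End Extension.
End RegularSubgroup.
End LeftAction.

Theorem corollary3p13 (gT : finGroupType) (X : finType) (G K : {group gT})
  (act : gT -> X -> X) (x0 : X) (n : nat)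
  (rho : mx_representation algC K n) (v : 'cV[algC]_n) :
  is_left_action G act ->
  act_transitive G act ->
  K \subset G ->
  regular_subgroup K act ->
  (forall k, k \in K -> rho k \is unitarymx) ->
  orbit_spans rho v ->
  (exists rt : mx_representation algC G n,
      [/\ forall g, g \in G -> rt g \is unitarymx,
          forall k, k \in K -> rt k = rho k
        & forall h, h \in stabilizer G act x0 -> rt h *m v = v])
  <-> in_L2_inv (stabilizer G act x0) K act x0 (fun k => inner v (rho k *m v)).
Proof.
(* Transitivity of G is implied by that of K. *)
move=> act_left _ sKG K_regular rho_unitary spans; split.
  case=> rt [rt_unitary rt_ext rt_fix].
  exact: (extension_coeff_invariant act_left sKG rt_unitary rt_ext rt_fix).
move=> coeff_inv.
exact: (extension_exists act_left sKG K_regular rho_unitary coeff_inv spans).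
Qed.
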